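(* Let $Q$ be a groupoid quantale with base locale $A$, let $X$ be a stably supported $Q$-module with support $\varsigma_X$ and inner product $\langle-,-\rangle$, and let $x\in X$ and $b\in A$ satisfy $b\triangleright1_X\le\langle x,x\rangle\cdot1_X$ and $b\triangleright x=x$. Then $b=\varsigma_X(x)$.
   Context: Let $A$ be a locale. An involutive $A$-$A$-quantale $Q$ is a sup-lattice with commuting unital left and right $A$-actions $a\triangleright q$, $q\triangleleft a$, an associative join-preserving multiplication with $(a\triangleright x)y=a\triangleright(xy)$, $(x\triangleleft a)y=x(a\triangleright y)$, $(xy)\triangleleft a=x(y\triangleleft a)$, and a join-preserving involution with $x^{**}=x$, $(xy)^*=y^*x^*$, $(a\triangleright x\triangleleft b)^*=b\triangleright x^*\triangleleft a$. A support is a sup-lattice homomorphism $\varsigma_Q:Q\to A$ with $\varsigma_Q(1_Q)=1_A$, $\varsigma_Q(x)\triangleright y\le xx^*y$, $\varsigma_Q(x)\triangleright x=x$; equivariant if $\varsigma_Q(a\triangleright x)=a\wedge\varsigma_Q(x)$. A groupoid quantale is such a $Q$ which is a frame with $(a\triangleright q)\wedge m=a\triangleright(q\wedge m)$, $m\wedge(q\triangleleft a)=(q\wedge m)\triangleleft a$, equipped with an equivariant support and a frame homomorphism $\upsilon:Q\to A$ with $\upsilon(a\triangleright1_Q)=a=\upsilon(1_Q\triangleleft a)$, such that the right adjoint of $Q\otimes_AQ\to Q$ preserves joins, $\bigvee_{xy\le a}\upsilon(x)\triangleright y=a$, and $\upsilon(a)\triangleright1_Q=\bigvee_{xx^*\le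 a}x$. A $Q$-module is a locale $X$ with a left $Q$-action $q\cdot x$ and unital left $A$-module structure $a\triangleright x$ satisfying $(a\triangleright q)\cdot x=a\triangleright(q\cdot x)$, $(q\triangleleft a)\cdot x=q\cdot(a\triangleright x)$, $a\triangleright(x\wedge y)=(a\triangleright x)\wedge y$. A pre-Hilbert $Q$-module has $\langle-,-\rangle:X\times X\to Q$ with $\langle q\cdot x,y\rangle=q\langle x,y\rangle$, $a\triangleright\langle x,1_X\rangle=\langle a\triangleright x,1_X\rangle$, $\langle\bigvee x_\alpha,y\rangle=\bigvee\langle x_\alpha,y\rangle$, $\langle x,y\rangle=\langle y,x\rangle^*$. A support is a monotone $\varsigma_X:X\to A$ with $\varsigma_X(1_X)=1_A$, $\varsigma_X(x)\triangleright1_X\le\langle x,x\rangle\cdot1_X$, $\varsigma_X(x)\triangleright x=x$; stable if $\varsigma_X(q\cdot x)\le\varsigma_Q(q)$ for all $q,x$. *)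

Set Implicit Arguments.
Unset Strict Implicit.

Record suplat := SupLat {
  sl_car :> Type;
  le : sl_car -> sl_car -> Prop;
  le_refl : forall x, le x x;
  le_trans : forall x y z, le x y -> le y z -> le x z;
  le_antisym : forall x y, le x y -> le y x -> x = y;
  sup : (sl_car -> Prop) -> sl_car;
  sup_ub : forall (S : sl_car -> Prop) x, S x -> le x (sup S);
  sup_least : forall (S : sl_car -> Prop) y,
      (forall x, S x -> le x y) -> le (sup S) y
}.
Arguments le {s} _ _.
Arguments sup {s} _.

Definition img {T U : Type} (f : T -> U) (S : T -> Prop) : U -> Prop :=
  fun u => exists t, S t /\ u = f t.

Definition top (L : suplat) : L := sup (fun _ : L => True).

Definition join_pres {L M : suplat} (f : L -> M) : Prop :=
  forall S : L -> Prop, f (sup S) = sup (img f S).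

Record frame := Frame {
  fr_sl :> suplat;
  meet : fr_sl -> fr_sl -> fr_sl;
  meet_glb : forall x y z, le z (meet x y) <-> (le z x /\ le z y);
  meet_distr : forall (a : fr_sl) (S : fr_sl -> Prop),
      meet a (sup S) = sup (img (meet a) S)
}.
Arguments meet {f} _ _.

Definition frame_hom {F G : frame} (f : F -> G) : Prop :=
  join_pres f /\ (forall x y, f (meet x y) = meet (f x) (f y)) /\
  f (top F) = top G.

Definition left_A_module (A : frame) (M : suplat) (act : A -> M -> M) : Prop :=
  (forall m, act (top A) m = m) /\
  (forall a b m, act a (act b m) = act (meet a b) m) /\
  (forall (S : A -> Prop) m, act (sup S) m = sup (img (fun a => act a m) S)) /\
  (forall a (S : M -> Prop), act a (sup S) = sup (img (act a) S)).

Definition right_A_module (A : frame) (M : suplat) (act : M -> A -> M) : Prop :=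
  (forall m, act m (top A) = m) /\
  (forall a b m, act (act m a) b = act m (meet a b)) /\
  (forall (S : A -> Prop) m, act m (sup S) = sup (img (fun a => act m a) S)) /\
  (forall a (S : M -> Prop), act (sup S) a = sup (img (fun m => act m a) S)).

Record AAQuantale (A : frame) (Q : suplat) := AAQ {
  lact : A -> Q -> Q;
  ract : Q -> A -> Q;
  qmul : Q -> Q -> Q;
  qinv : Q -> Q;
  lact_mod : left_A_module lact;
  ract_mod : right_A_module ract;
  acts_commute : forall a b q, ract (lact a q) b = lact a (ract q b);
  qmul_assoc : forall x y z, qmul (qmul x y) z = qmul x (qmul y z);
  qmul_join_l : forall (S : Q -> Prop) y,
      qmul (sup S) y = sup (img (fun x => qmul x y) S);
  qmul_join_r : forall x (S : Q -> Prop),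
      qmul x (sup S) = sup (img (qmul x) S);
  lact_mul : forall a x y, qmul (lact a x) y = lact a (qmul x y);
  ract_lact_mul : forall a x y, qmul (ract x a) y = qmul x (lact a y);
  ract_mul : forall a x y, ract (qmul x y) a = qmul x (ract y a);
  qinv_join : join_pres qinv;
  qinv_invol : forall x, qinv (qinv x) = x;
  qinv_mul : forall x y, qinv (qmul x y) = qmul (qinv y) (qinv x);
  qinv_act : forall a b x,
      qinv (ract (lact a x) b) = ract (lact b (qinv x)) a
}.
Arguments lact {A Q} _ _ _.
Arguments ract {A Q} _ _ _.
Arguments qmul {A Q} _ _ _.
Arguments qinv {A Q} _ _.

Definition is_qsupport {A : frame} {Q : suplat} (M : AAQuantale A Q)
    (s : Q -> A) : Prop :=
  join_pres s /\ s (top Q) = top A /\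
  (forall x y, le (lact M (s x) y) (qmul M (qmul M x (qinv M x)) y)) /\
  (forall x, lact M (s x) x = x).

Definition equivariant {A : frame} {Q : suplat} (M : AAQuantale A Q)
    (s : Q -> A) : Prop :=
  forall a x, s (lact M a x) = meet a (s x).

(* Q (x)_A Q is represented (Joyal-Tierney) by the "tensor ideals" of Q x Q
   (down-closed, closed under joins in each variable) that are A-balanced;
   ordered by inclusion, joins = least such ideal containing the union. *)
Definition tensor_ideal {Q : suplat} (D : Q -> Q -> Prop) : Prop :=
  (forall x y x' y', D x y -> le x' x -> le y' y -> D x' y') /\
  (forall (S : Q -> Prop) y, (forall x, S x -> D x y) -> D (sup S) y) /\
  (forall x (S : Q -> Prop), (forall y, S y -> D x y) -> D x (sup S)).

Definition A_balanced {A : frame} {Q : suplat} (M : AAQuantale A Q)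
    (D : Q -> Q -> Prop) : Prop :=
  forall x a y, D (ract M x a) y <-> D x (lact M a y).

(* The right adjoint of the multiplication Q (x)_A Q -> Q is
   q |-> {(x,y) | xy <= q}; it preserves joins iff for every family S the
   element for (sup S) is below the join of the elements for s in S, i.e. is
   contained in every balanced tensor ideal containing all of them. *)
Definition mul_radj_join_pres {A : frame} {Q : suplat} (M : AAQuantale A Q)
    : Prop :=
  forall (S : Q -> Prop) (D : Q -> Q -> Prop),
    tensor_ideal D -> A_balanced M D ->
    (forall s, S s -> forall x y, le (qmul M x y) s -> D x y) ->
    forall x y, le (qmul M x y) (sup S) -> D x y.

Record GroupoidQuantale (A : frame) := GQ {
  gq_Q : frame;
  gq_M : AAQuantale A gq_Q;
  gq_lact_meet : forall a q m,
      meet (lact gq_M a q) m = lact gq_M a (meet q m);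
  gq_ract_meet : forall a q m,
      meet m (ract gq_M q a) = ract gq_M (meet q m) a;
  gq_supp : gq_Q -> A;
  gq_supp_ok : is_qsupport gq_M gq_supp;
  gq_supp_equiv : equivariant gq_M gq_supp;
  gq_ups : gq_Q -> A;
  gq_ups_hom : frame_hom gq_ups;
  gq_ups_l : forall a, gq_ups (lact gq_M a (top gq_Q)) = a;
  gq_ups_r : forall a, gq_ups (ract gq_M (top gq_Q) a) = a;
  gq_radj : mul_radj_join_pres gq_M;
  gq_ax1 : forall a : gq_Q,
      sup (fun z => exists x y, le (qmul gq_M x y) a /\
                                z = lact gq_M (gq_ups x) y) = a;
  gq_ax2 : forall a : gq_Q,
      lact gq_M (gq_ups a) (top gq_Q) =
      sup (fun x => le (qmul gq_M x (qinv gq_M x)) a)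
}.
Arguments gq_Q {A} _.
Arguments gq_M {A} _.
Arguments gq_supp {A} _ _.

Record QModule (A : frame) (Q : suplat) (M : AAQuantale A Q) := QMod {
  qm_X : frame;
  qact : Q -> qm_X -> qm_X;
  aact : A -> qm_X -> qm_X;
  qact_assoc : forall p q x, qact (qmul M p q) x = qact p (qact q x);
  qact_join_l : forall (S : Q -> Prop) x,
      qact (sup S) x = sup (img (fun q => qact q x) S);
  qact_join_r : forall q (S : qm_X -> Prop),
      qact q (sup S) = sup (img (qact q) S);
  aact_mod : left_A_module aact;
  qm_ax1 : forall a q x, qact (lact M a q) x = aact a (qact q x);
  qm_ax2 : forall a q x, qact (ract M q a) x = qact q (aact a x);
  qm_ax3 : forall a x y, aact a (meet x y) = meet (aact a x) y
}.
Arguments qm_X {A Q M} _.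
Arguments qact {A Q M} _ _ _.
Arguments aact {A Q M} _ _ _.

Definition is_inner_product {A : frame} {Q : suplat} {M : AAQuantale A Q}
    (X : QModule M) (ip : qm_X X -> qm_X X -> Q) : Prop :=
  (forall q x y, ip (qact X q x) y = qmul M q (ip x y)) /\
  (forall a x, lact M a (ip x (top (qm_X X))) = ip (aact X a x) (top (qm_X X))) /\
  (forall (S : qm_X X -> Prop) y, ip (sup S) y = sup (img (fun x => ip x y) S)) /\
  (forall x y, ip x y = qinv M (ip y x)).

Definition is_msupport {A : frame} {Q : suplat} {M : AAQuantale A Q}
    (X : QModule M) (ip : qm_X X -> qm_X X -> Q) (s : qm_X X -> A) : Prop :=
  (forall x y, le x y -> le (s x) (s y)) /\
  s (top (qm_X X)) = top A /\
  (forall x, le (aact X (s x) (top (qm_X X))) (qact X (ip x x) (top (qm_X X)))) /\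
  (forall x, aact X (s x) x = x).

Definition stable_support {A : frame} {Q : suplat} {M : AAQuantale A Q}
    (X : QModule M) (sQ : Q -> A) (s : qm_X X -> A) : Prop :=
  forall q x, le (s (qact X q x)) (sQ q).

Arguments is_inner_product {A Q M} X ip.
Arguments is_msupport {A Q M} X ip s.
Arguments stable_support {A Q M} X sQ s.

(* Both inequalities go through the stable support.  For [sX x <= b]:
   [x = b |> x <= (b |> <x,x>) . 1], so [sX x <= sQ (b |> <x,x>) = b /\ sQ <x,x>].
   For [b <= sX x]: [b |> 1 <= <x,x> . 1 <= sX x |> 1], and [a |-> a |> 1]
   reflects the order, since [sQ <a |> 1, 1> = a /\ sQ <1,1>] and stability
   applied to [1 <= <1,1> . 1] gives [sQ <1,1> = 1]. *)

Set Implicit Arguments.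

Lemma le_top (L : suplat) (x : L) : le x (top L).
Proof. now apply sup_ub. Qed.

Lemma join_pres_monotone (L M : suplat) (f : L -> M) :
  join_pres f -> forall x y, le x y -> le (f x) (f y).
Proof.
  intros Hf x y Hxy.
  assert (Ey : y = sup (fun z => z = x \/ z = y)).
  { apply le_antisym.
    - apply sup_ub. now right.
    - apply sup_least. intros z [-> | ->]; [exact Hxy | apply le_refl]. }
  rewrite Ey, Hf. apply sup_ub. exists x. split; [now left | reflexivity].
Qed.

Lemma meet_le_l (F : frame) (a b : F) : le (meet a b) a.
Proof. exact (proj1 (proj1 (meet_glb a b _) (le_refl _))). Qed.

Lemma meet_top_r (F : frame) (a : F) : meet a (top F) = a.
Proof.
  apply le_antisym; [apply meet_le_l |].
  apply meet_glb. split; [apply le_refl | apply le_top].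
Qed.

Section QModuleMonotone.

Variables (A : frame) (Q : suplat) (M : AAQuantale A Q) (X : QModule M).

Lemma aact_monotone a (y y' : qm_X X) : le y y' -> le (aact X a y) (aact X a y').
Proof. apply join_pres_monotone. exact (proj2 (proj2 (proj2 (aact_mod X))) a). Qed.

Lemma qact_monotone (q q' : Q) y : le q q' -> le (qact X q y) (qact X q' y).
Proof.
  apply (join_pres_monotone (f := fun p => qact X p y)). intro S. apply qact_join_l.
Qed.

Variable ip : qm_X X -> qm_X X -> Q.
Hypothesis Hip : is_inner_product X ip.

Lemma ip_monotone_l y y' z : le y y' -> le (ip y z) (ip y' z).
Proof.
  apply (join_pres_monotone (f := fun w => ip w z)). intro S.
  apply (proj1 (proj2 (proj2 Hip))).
Qed.

Lemma ip_monotone_r y z z' : le z z' -> le (ip y z) (ip y z').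
Proof.
  intro Hz. rewrite (proj2 (proj2 (proj2 Hip)) y z), (proj2 (proj2 (proj2 Hip)) y z').
  apply join_pres_monotone; [apply qinv_join | now apply ip_monotone_l].
Qed.

End QModuleMonotone.

Section StableSupport.

Variables (A : frame) (Q : suplat) (M : AAQuantale A Q) (sQ : Q -> A).
Hypothesis sQ_join : join_pres sQ.
Hypothesis sQ_equiv : equivariant M sQ.

Variables (X : QModule M) (ip : qm_X X -> qm_X X -> Q) (sX : qm_X X -> A).
Hypothesis Hip : is_inner_product X ip.
Hypothesis HsX : is_msupport X ip sX.
Hypothesis Hstab : stable_support X sQ sX.

Local Notation topX := (top (qm_X X)).

Lemma le_qact_ip_self x : le x (qact X (ip x x) topX).
Proof.
  destruct HsX as [_ [_ [Hle Hfix]]].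
  apply le_trans with (aact X (sX x) x); [rewrite Hfix; apply le_refl |].
  eapply le_trans; [apply aact_monotone, le_top | apply Hle].
Qed.

Lemma msupport_le_of_aact_fixed b x : aact X b x = x -> le (sX x) b.
Proof.
  intro Hbx.
  assert (Hx : le x (qact X (lact M b (ip x x)) topX)).
  { rewrite qm_ax1. apply le_trans with (aact X b x); [rewrite Hbx; apply le_refl |].
    apply aact_monotone, le_qact_ip_self. }
  eapply le_trans; [apply (proj1 HsX), Hx |].
  eapply le_trans; [apply Hstab |].
  rewrite sQ_equiv. apply meet_le_l.
Qed.

Lemma qact_ip_self_le_aact_msupport x :
  le (qact X (ip x x) topX) (aact X (sX x) topX).
Proof.
  assert (Hxx : le (ip x x) (lact M (sX x) (ip x topX))).
  { rewrite (proj1 (proj2 Hip)), (proj2 (proj2 (proj2 HsX))).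
    apply (ip_monotone_r Hip), le_top. }
  eapply le_trans; [apply qact_monotone, Hxx |].
  rewrite qm_ax1. apply aact_monotone, le_top.
Qed.

Lemma qsupport_ip_top : sQ (ip topX topX) = top A.
Proof.
  destruct HsX as [Hmono [Htop _]].
  apply le_antisym; [apply le_top |].
  rewrite <- Htop.
  eapply le_trans; [apply Hmono, le_qact_ip_self | apply Hstab].
Qed.

Lemma aact_top_reflect a c : le (aact X a topX) (aact X c topX) -> le a c.
Proof.
  intro Hac.
  assert (H : le (lact M a (ip topX topX)) (lact M c (ip topX topX))).
  { rewrite !(proj1 (proj2 Hip)). apply (ip_monotone_l Hip), Hac. }
  apply (join_pres_monotone sQ_join) in H.
  now rewrite !sQ_equiv, qsupport_ip_top, !meet_top_r in H.
Qed.

End StableSupport.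

Theorem lemma4p4 (A : frame) (G : GroupoidQuantale A) (X : QModule (gq_M G))
    (ip : qm_X X -> qm_X X -> gq_Q G) (sX : qm_X X -> A)
    (Hip : is_inner_product X ip) (HsX : is_msupport X ip sX)
    (Hstab : stable_support X (gq_supp G) sX)
    (x : qm_X X) (b : A)
    (Hb1 : le (aact X b (top (qm_X X))) (qact X (ip x x) (top (qm_X X))))
    (Hb2 : aact X b x = x) :
  b = sX x.
Proof.
  pose proof (proj1 (@gq_supp_ok A G)) as sQ_join.
  pose proof (@gq_supp_equiv A G) as sQ_equiv.
  apply le_antisym.
  - apply (aact_top_reflect sQ_join sQ_equiv Hip HsX Hstab).
    eapply le_trans; [exact Hb1 |].
    now apply qact_ip_self_le_aact_msupport.
  - exact (msupport_le_of_aact_fixed sQ_equiv HsX Hstab b Hb2).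
Qed.
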